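(* For every positive integer $k$ there exists a scoring rule $f$ (assigning to each item $i$ of an instance a score $f(i,\mathcal{A}_n)\ge 0$, not required to depend on the approval profile) such that the price of justified representation $P(k,f)=\sup_{\mathcal{I}_{m,\mathcal{A}_n,k}} P(\mathcal{I}_{m,\mathcal{A}_n,k},f)$ is unbounded (i.e. equals $+\infty$).
   Context: An instance $\mathcal{I}_{m,\mathcal{A}_n,k}=\langle m,\mathcal{A}_n,k\rangle$ consists of a set of items (comments) $[m]=\{1,\dots,m\}$, a set of users $[n]$, an approval profile $\mathcal{A}_n=(A_1,\dots,A_n)$ with $A_u\subseteq[m]$ the set of items approved by user $u$, and a target size $k\le m$. A scoring rule assigns each item $i$ a score $f(i,\mathcal{A}_n)\ge 0$; scores of sets are additive: $f(S)=\sum_{i\in S}f(i,\mathcal{A}_n)$. A group of users $G\subseteq[n]$ is cohesive if $\bigcap_{u\in G}A_u\neq\emptyset$. A set $S\subseteq[m]$ represents $G$ if some $u\in G$ has $A_u\cap S\neq\emptyset$. A set $S$ satisfies justified representation (JR) if $|S|=k$ and $S$ represents every cohesive group of at least $n/k$ users. Let $S^*$ be a set maximizing $f(S)$ over all $S\subseteq[m]$ with $|S|=k$, and $S^*_{JR}$ a set maximizing $f(S)$ over all sets satisfying JR. The price of JR on an instance is $P(\mathcal{I}_{m,\mathcal{A}_n,k},f)=f(S^* )/f(S^*_{JR})$, and $P(k,f)=\max_{\mathcal{I}_{m,\mathcal{A}_n,k}}P(\mathcal{I}_{m,\mathcal{A}_n,k},f)$ over all instances with set size $k$. *)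

From HB Require Import structures.
From mathcomp Require Import all_boot all_order all_algebra.
From mathcomp Require Import reals.
Set Implicit Arguments. Unset Strict Implicit. Unset Printing Implicit Defensive.
Import Order.TTheory GRing.Theory Num.Theory.
Local Open Scope ring_scope.

Definition profile (m n : nat) := {ffun 'I_n -> {set 'I_m}}.

Definition scoring_rule (R : realType) :=
  forall (m n : nat), profile m n -> 'I_m -> R.

Definition nonneg_rule (R : realType) (f : scoring_rule R) : Prop :=
  forall m n (A : profile m n) (i : 'I_m), 0 <= f m n A i.

Definition set_score (R : realType) (f : scoring_rule R) m n (A : profile m n)
  (S : {set 'I_m}) : R := \sum_(i in S) f m n A i.

Definition cohesive m n (A : profile m n) (G : {set 'I_n}) : bool :=
  (\bigcap_(u in G) A u) != set0.

Definition represents m n (A : profile m n) (S : {set 'I_m}) (G : {set 'I_n}) : bool :=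
  [exists u in G, A u :&: S != set0].

(* justified representation; |G| >= n/k is written n <= |G| * k (k > 0) *)
Definition JR m n (A : profile m n) (k : nat) (S : {set 'I_m}) : Prop :=
  #|S| = k /\
  forall G : {set 'I_n}, cohesive A G -> (n <= #|G| * k)%N -> represents A S G.

From HB Require Import structures.
From mathcomp Require Import all_boot all_order all_algebra.
From mathcomp Require Import reals.
Set Implicit Arguments. Unset Strict Implicit. Unset Printing Implicit Defensive.
Import Order.TTheory GRing.Theory Num.Theory.
Local Open Scope ring_scope.

(* Each of k users approves a private item of its own, so the k singleton
   groups are cohesive of size n/k = 1 and JR forces exactly those k items.
   A rule giving them score 0 and k further items score 1 makes the price of
   JR infinite. *)

Lemma set1I_neq0 (I : finType) (S : {set I}) (x : I) :
  ([set x] :&: S != set0) = (x \in S).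
Proof. by rewrite setI_eq0 disjoints1 negbK. Qed.

Section JustifiedRepresentation.

Variables (m n k : nat) (A : profile m n).

Lemma JR_of_cover (S : {set 'I_m}) :
  (0 < n)%N -> #|S| = k -> (forall u, A u :&: S != set0) -> JR A k S.
Proof.
move=> n_gt0 cardS coverS; split=> // G _ largeG.
have /set0Pn [u uG] : G != set0.
  by rewrite -card_gt0 lt0n; apply: contraTneq largeG => ->; rewrite -ltnNge.
by apply/existsP; exists u; rewrite uG coverS.
Qed.

Lemma JR_singleton_ballot_mem (S : {set 'I_m}) (u : 'I_n) (x : 'I_m) :
  (n <= k)%N -> A u = [set x] -> JR A k S -> x \in S.
Proof.
move=> n_le_k Au [_ JR_S].
have cohesive_u : cohesive A [set u].
  by rewrite /cohesive big_set1 Au -card_gt0 cards1.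
have large_u : (n <= #|[set u]| * k)%N by rewrite cards1 mul1n.
have /existsP [_ /andP [/set1P -> Au_S]] := JR_S _ cohesive_u large_u.
by rewrite -set1I_neq0 -Au.
Qed.

End JustifiedRepresentation.

Section PrivateBallots.

Variable k : nat.

Definition private_profile : profile (k + k) k := [ffun u => [set lshift k u]].

Definition private_items : {set 'I_(k + k)} := [set lshift k u | u in [set: 'I_k]].

Definition spare_items : {set 'I_(k + k)} := [set rshift k u | u in [set: 'I_k]].

Lemma card_private_items : #|private_items| = k.
Proof. by rewrite card_imset ?cardsT ?card_ord //; apply: lshift_inj. Qed.

Lemma card_spare_items : #|spare_items| = k.
Proof. by rewrite card_imset ?cardsT ?card_ord //; apply: rshift_inj. Qed.

Lemma JR_private_profile_eq (S : {set 'I_(k + k)}) :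
  JR private_profile k S -> S = private_items.
Proof.
move=> JR_S; apply/eqP.
rewrite eq_sym eqEcard card_private_items JR_S.1 leqnn andbT.
apply/subsetP=> _ /imsetP [u _ ->].
by apply: (JR_singleton_ballot_mem (leqnn k) _ JR_S); rewrite ffunE.
Qed.

Lemma JR_private_items : (0 < k)%N -> JR private_profile k private_items.
Proof.
move=> k_gt0; apply: JR_of_cover k_gt0 card_private_items _ => u.
by rewrite ffunE set1I_neq0 imset_f ?inE.
Qed.

End PrivateBallots.

Definition late_item_rule (R : realType) : scoring_rule R :=
  fun m n _ i => if (i < n)%N then 0 else 1.

Lemma late_item_rule_nonneg (R : realType) : nonneg_rule (late_item_rule R).
Proof. by move=> m n A i; rewrite /late_item_rule; case: ifP. Qed.

Lemma score_private_items (R : realType) k :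
  set_score (late_item_rule R) (private_profile k) (private_items k) = 0.
Proof.
by apply: big1 => _ /imsetP [u _ ->]; rewrite /late_item_rule /= ltn_ord.
Qed.

Lemma score_spare_items (R : realType) k :
  set_score (late_item_rule R) (private_profile k) (spare_items k) = k%:R.
Proof.
rewrite /set_score big_imset /=; last by move=> x y _ _; apply: rshift_inj.
rewrite (eq_bigr (fun _ => 1)) => [|i _]; last first.
  by rewrite /late_item_rule /= ltnNge leq_addr.
by rewrite sumr_const cardsT card_ord.
Qed.

Theorem proposition1 (R : realType) (k : nat) : (0 < k)%N ->
  exists f : scoring_rule R, nonneg_rule f /\
    forall B : R, exists (m n : nat) (A : profile m n),
      [/\ (0 < n)%N, (k <= m)%N,
          (exists S : {set 'I_m}, JR A k S) &
          exists S0 : {set 'I_m}, #|S0| = k /\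
            forall S : {set 'I_m}, JR A k S ->
              B * set_score f A S < set_score f A S0].
Proof.
move=> k_gt0; exists (late_item_rule R); split; first exact: late_item_rule_nonneg.
move=> B; exists (k + k)%N, k, (private_profile k); split=> //.
- exact: leq_addr.
- by exists (private_items k); apply: JR_private_items.
- exists (spare_items k); split; first exact: card_spare_items.
  move=> S /JR_private_profile_eq ->.
  by rewrite score_private_items score_spare_items mulr0 ltr0n.
Qed.
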